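(* Consider the static single-object erasure-coded Byzantine read/write protocol described in the context over a set $C$ of flexnodes, at most $b<\frac{|C|-k}{3}$ of which are Byzantine. In any execution, if $\pi$ is a complete get-data primitive on $C$ that returns $\langle t_\pi,v_\pi\rangle$, then either $\langle t_\pi,v_\pi\rangle=\langle t_0,v_0\rangle$, or there exists a put-data$(\langle t_\pi,v_\pi\rangle)$ primitive $\phi$ on $C$ in the execution such that $\pi$ did not complete before the invocation of $\phi$.
   Context: Model. $C$ is a fixed finite set of processes (''flexnodes'') over asynchronous reliable channels. Up to $b$ flexnodes may be Byzantine. Processes invoking reads/writes follow the protocol but may crash. Signatures are unforgeable: only $p$ can produce a valid signature of $p$, so Byzantine flexnodes cannot forge signed pairs. An $[n,k]$ RLNC code with $n=|C|$: $\mathrm{Encode}(v)$ produces $|C|$ coded elements, any $k$ of which (from the same encoding) recover $v$. Tags are pairs $(z,w)$, $z\in\mathbb{N}$, $w$ a writer identifier, ordered lexicographically; $\langle t_0,v_0\rangle$ is the initial tag-value pair. A parameter $\delta\ge1$ is fixed. A quorum is any subset of $C$ of size $\lceil (2|C|+k)/3\rceil$. State. Each flexnode keeps a set $List$ of signed triples $(\langle t,e\rangle,\sigma)$, initially holding only the initial pair with tag $t_0$. Primitives (by flexnode $p$): put-data$(\langle t,v\rangle)$: encode $v$ into $e_1,\dots,e_{|C|}$, send $\langle t,e_j\rangle$ signed by $p$ to the $j$-th flexnode; a receiver adds it to $List$ if the signature verifies and no entry with tag $t$ exists, then if $|List|>\delta+1$ removes the entries with minimum tag, and acknowledges; $p$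 waits for a quorum of acknowledgements. get-data: query all, each replies with its $List$, wait for a quorum, keep the pairs with valid signatures, take the maximum tag appearing in at least $k$ received lists, decode the value from its coded elements and return the pair; if no such tag exists the primitive does not complete. (get-tag: query all, each replies with its signed max-tag entry, wait for a quorum, return the maximum verified tag.) Operations: read = get-data then put-data of the obtained pair; write$(v)$ by $w$ = get-tag returning $t$, then put-data$(\langle (t.z+1,w),v\rangle)$. *)

(* A model of the static single-object erasure-coded
   Byzantine read/write protocol as a transition system over global states;
   executions are finite sequences of steps from the initial state, recorded
   as traces of primitive invocation/response events. *)
From mathcomp Require Import all_boot.
Set Implicit Arguments. Unset Strict Implicit. Unset Printing Implicit Defensive.

(* Tags (z, w): z a natural number, w a writer identifier (processes that
   invoke operations are identified by natural numbers).  Lexicographic order. *)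
Definition tag := (nat * nat)%type.
Definition tag_lt (t1 t2 : tag) : bool :=
  (t1.1 < t2.1) || ((t1.1 == t2.1) && (t1.2 < t2.2)).
Definition tag_le (t1 t2 : tag) : bool := (t1 == t2) || tag_lt t1 t2.
Definition t0 : tag := (0, 0).

(* The signer of a signed pair: [Some c] = process c, [None] = the set-up
   signature of the initial pair. *)
Definition signer := option nat.

Section Protocol.
Variables (node : finType) (V E : eqType).
(* Encode v = [enc v j | j in C] ;  dec = the decoder of the code. *)
Variables (enc : V -> node -> E) (dec : seq E -> option V).

Definition rlnc_code (k : nat) : Prop :=
  [/\ 0 < k <= #|node|,
      (forall v (S : seq node), uniq S -> size S = k ->
          dec [seq enc v j | j <- S] = Some v) &
      (forall v (s : seq E) u, all (fun e => [exists j, e == enc v j]) s ->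
          dec s = Some u -> u = v)].

Variables (k delta : nat) (v0 : V) (Byz : {set node}).

(* quorum size ceil((2|C| + k)/3) *)
Definition qsize : nat := (2 * #|node| + k + 2) %/ 3.

Definition entry := (tag * E * signer)%type.
Definition etag (x : entry) : tag := x.1.1.
Definition eelt (x : entry) : E := x.1.2.

(* messages; the two nat fields are (client, primitive instance number) *)
Inductive msg :=
| MQueryTag of nat & nat
| MQueryData of nat & nat
| MPut of nat & nat & entry
| MTagReply of nat & nat & option entry   (* None = reply with invalid signature *)
| MDataReply of nat & nat & seq entry
| MAck of nat & nat.

Definition reply_to (m : msg) : option nat :=
  match m with
  | MTagReply c _ _ | MDataReply c _ _ | MAck c _ => Some c
  | _ => None
  end.

Inductive cstate :=
| Idle
| WGetTag of nat & V & seq (node * option entry)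
| WPut of nat & seq node
| RGetData of nat & seq (node * seq entry)
| RPut of nat & seq node.

(* primitive events: (client, instance, ...) *)
Inductive event :=
| InvGetTag of nat & nat
| RespGetTag of nat & nat & tag
| InvGetData of nat & nat
| RespGetData of nat & nat & tag & V
| InvPutData of nat & nat & tag & V
| RespPutData of nat & nat.

Record gstate := GState {
  lists : node -> seq entry;      (* List of each (honest) flexnode *)
  cst : nat -> cstate;
  cnt : nat -> nat;               (* fresh primitive-instance counters *)
  toNode : seq (node * msg);      (* in transit to flexnode (destination) *)
  toClient : seq (node * msg);    (* in transit to a process (source node) *)
  produced : seq entry            (* all signed pairs ever produced *)
}.

Definition upd {A : Type} (f : nat -> A) (c : nat) (a : A) : nat -> A :=
  fun c' => if c' == c then a else f c'.
Definition updn {A : Type} (f : node -> A) (j : node) (a : A) : node -> A :=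
  fun j' => if j' == j then a else f j'.

Fixpoint mintag (t : tag) (L : seq entry) : tag :=
  match L with
  | [::] => t
  | x :: L' => mintag (if tag_lt (etag x) t then etag x else t) L'
  end.

Definition insert_entry (L : seq entry) (x : entry) : seq entry :=
  if has (fun y => etag y == etag x) L then L
  else if delta.+1 < size (x :: L)
       then [seq y <- x :: L | etag y != mintag (etag x) (x :: L)]
       else x :: L.

Inductive node_handle (L : seq entry) (j : node) :
    msg -> seq entry -> seq (node * msg) -> Prop :=
| NHQueryTag c n x : x \in L -> (forall y, y \in L -> tag_le (etag y) (etag x)) ->
    node_handle L j (MQueryTag c n) L [:: (j, MTagReply c n (Some x))]
| NHQueryData c n :
    node_handle L j (MQueryData c n) L [:: (j, MDataReply c n L)]
| NHPut c n x :
    node_handle L j (MPut c n x) (insert_entry L x) [:: (j, MAck c n)].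

Definition recv (cs : cstate) (j : node) (m : msg) : option cstate :=
  match cs, m with
  | WGetTag n v R, MTagReply _ n' r =>
      if [&& n == n', j \notin map fst R & size R < qsize]
      then Some (WGetTag n v (rcons R (j, r))) else None
  | RGetData n R, MDataReply _ n' L =>
      if [&& n == n', j \notin map fst R & size R < qsize]
      then Some (RGetData n (rcons R (j, L))) else None
  | WPut n A, MAck _ n' =>
      if [&& n == n', j \notin A & size A < qsize]
      then Some (WPut n (rcons A j)) else None
  | RPut n A, MAck _ n' =>
      if [&& n == n', j \notin A & size A < qsize]
      then Some (RPut n (rcons A j)) else None
  | _, _ => None
  end.

(* messages a Byzantine flexnode can send to a process: signatures cannot be
   forged, so every validly signed pair in it was produced (entries with invalid
   signatures are discarded by the receiver and are hence omitted, except that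
   an invalid get-tag reply still counts towards the quorum) *)
Definition byz_ok (P : seq entry) (m : msg) : bool :=
  match m with
  | MTagReply _ _ r => if r is Some x then x \in P else true
  | MDataReply _ _ L => all (fun x => x \in P) L
  | MAck _ _ => true
  | _ => false
  end.

Definition nlists (R : seq (node * seq entry)) (t : tag) : nat :=
  count (fun p => has (fun x => etag x == t) p.2) R.
Definition elems (R : seq (node * seq entry)) (t : tag) : seq E :=
  flatten [seq [seq eelt x | x <- p.2 & etag x == t] | p <- R].

Definition put_msgs (c n : nat) (t : tag) (v : V) : seq (node * msg) :=
  [seq (j, MPut c n (t, enc v j, Some c)) | j <- enum node].
Definition put_sigs (c : nat) (t : tag) (v : V) : seq entry :=
  [seq (t, enc v j, Some c) | j <- enum node].

Inductive step : gstate -> seq event -> gstate -> Prop :=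
| StWriteInv s c v n :
    cst s c = Idle -> n = cnt s c ->
    step s [:: InvGetTag c n]
      (GState (lists s) (upd (cst s) c (WGetTag n v [::])) (upd (cnt s) c n.+1)
              (toNode s ++ [seq (j, MQueryTag c n) | j <- enum node])
              (toClient s) (produced s))
| StGetTagResp s c n v R t n' :
    cst s c = WGetTag n v R -> size R = qsize ->
    t \in [seq etag x | x <- pmap snd R] ->
    (forall t', t' \in [seq etag x | x <- pmap snd R] -> tag_le t' t) ->
    n' = cnt s c ->
    step s [:: RespGetTag c n t; InvPutData c n' (t.1.+1, c) v]
      (GState (lists s) (upd (cst s) c (WPut n' [::])) (upd (cnt s) c n'.+1)
              (toNode s ++ put_msgs c n' (t.1.+1, c) v) (toClient s)
              (produced s ++ put_sigs c (t.1.+1, c) v))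
| StReadInv s c n :
    cst s c = Idle -> n = cnt s c ->
    step s [:: InvGetData c n]
      (GState (lists s) (upd (cst s) c (RGetData n [::])) (upd (cnt s) c n.+1)
              (toNode s ++ [seq (j, MQueryData c n) | j <- enum node])
              (toClient s) (produced s))
| StGetDataResp s c n R t v n' :
    cst s c = RGetData n R -> size R = qsize ->
    k <= nlists R t -> (forall t', k <= nlists R t' -> tag_le t' t) ->
    dec (elems R t) = Some v ->
    n' = cnt s c ->
    step s [:: RespGetData c n t v; InvPutData c n' t v]
      (GState (lists s) (upd (cst s) c (RPut n' [::])) (upd (cnt s) c n'.+1)
              (toNode s ++ put_msgs c n' t v) (toClient s)
              (produced s ++ put_sigs c t v))
| StPutResp s c n A :
    (cst s c = WPut n A \/ cst s c = RPut n A) -> size A = qsize ->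
    step s [:: RespPutData c n]
      (GState (lists s) (upd (cst s) c Idle) (cnt s) (toNode s) (toClient s)
              (produced s))
| StRecv s c j m l1 l2 cs' :
    toClient s = l1 ++ (j, m) :: l2 -> reply_to m = Some c ->
    recv (cst s c) j m = Some cs' ->
    step s [::]
      (GState (lists s) (upd (cst s) c cs') (cnt s) (toNode s) (l1 ++ l2)
              (produced s))
| StByzRecv s c j m cs' :
    j \in Byz -> byz_ok (produced s) m -> reply_to m = Some c ->
    recv (cst s c) j m = Some cs' ->
    step s [::]
      (GState (lists s) (upd (cst s) c cs') (cnt s) (toNode s) (toClient s)
              (produced s))
| StNode s j m l1 l2 L' out :
    j \notin Byz -> toNode s = l1 ++ (j, m) :: l2 ->
    node_handle (lists s j) j m L' out ->
    step s [::]
      (GState (updn (lists s) j L') (cst s) (cnt s) (l1 ++ l2) (toClient s ++ out)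
              (produced s))
(* a Byzantine flexnode sends a put-data message (with a validly signed,
   hence previously produced, pair) to an honest flexnode *)
| StByzPut s j j' x :
    j \notin Byz -> j' \in Byz -> x \in produced s ->
    step s [::]
      (GState (updn (lists s) j (insert_entry (lists s j) x)) (cst s) (cnt s)
              (toNode s) (toClient s) (produced s)).

Definition init : gstate :=
  GState (fun j => [:: (t0, enc v0 j, None)]) (fun _ => Idle) (fun _ => 0)
         [::] [::] [seq (t0, enc v0 j, None) | j <- enum node].

Inductive reach : gstate -> seq event -> Prop :=
| Reach0 : reach init [::]
| ReachS s tr evs s' : reach s tr -> step s evs s' -> reach s' (tr ++ evs).

End Protocol.

From Pilot Require Import Defs.
From mathcomp Require Import all_boot zify.
From Stdlib Require List.
Import Defs. (* so that [tag] refers to [Defs.tag], not ssreflect's [tag] *)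
Set Implicit Arguments. Unset Strict Implicit. Unset Printing Implicit Defensive.

(* Every signed pair in the system is a coded element [enc v j] of a pair
   <t, v> originated by the execution (the initial pair or the argument of a
   put-data invocation), and each tag is originated with a single value.  The
   latter holds because a writer never reuses a tag: the get-tag quorum of its
   next write meets, in an honest flexnode, the quorum that acknowledged its
   previous put-data, and an honest flexnode only evicts entries below its
   maximal tag.  So the coded elements that get-data decodes for its tag all
   come from the encoding of one originated value, and soundness of the decoder
   (the only property of the code used) returns that value. *)

(** * Tags and flexnode lists *)

Lemma tag_le_refl t : tag_le t t.
Proof. by rewrite /tag_le eqxx. Qed.

Lemma tag_le_trans t1 t2 t3 : tag_le t1 t2 -> tag_le t2 t3 -> tag_le t1 t3.
Proof.
by case: t1 t2 t3 => [a1 b1] [a2 b2] [a3 b3]; rewrite /tag_le /tag_lt /= !xpair_eqE; lia.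
Qed.

Lemma tag_ltW t1 t2 : tag_lt t1 t2 -> tag_le t1 t2.
Proof. by rewrite /tag_le => ->; rewrite orbT. Qed.

Lemma tag_leNlt t1 t2 : ~~ tag_lt t1 t2 -> tag_le t2 t1.
Proof. by case: t1 t2 => [a1 b1] [a2 b2]; rewrite /tag_le /tag_lt /= !xpair_eqE; lia. Qed.

Lemma tag_le_succ t c : tag_le t (t.1.+1, c).
Proof. by rewrite /tag_le /tag_lt ltnSn orbT. Qed.

Lemma tag_le_succF t c : tag_le (t.1.+1, c) t = false.
Proof. by case: t => a b; rewrite /tag_le /tag_lt /= xpair_eqE; lia. Qed.

Lemma cat_eq_split (A : Type) (tr evs pre post : seq A) e :
  tr ++ evs = pre ++ e :: post ->
  (exists post', tr = pre ++ e :: post') \/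
  (exists evs1, evs = evs1 ++ e :: post /\ pre = tr ++ evs1).
Proof.
elim: tr pre => [|a tr IH] pre /=; first by move=> ->; right; exists pre.
case: pre => [|b pre] /= [<- eq_rest]; first by left; exists tr.
by case: (IH _ eq_rest) => [[p ->] | [e1 [-> ->]]]; [left; exists p | right; exists e1].
Qed.

Lemma In_cat_cons (A : Type) (x y : A) l1 l2 :
  List.In x (l1 ++ l2) -> List.In x (l1 ++ y :: l2).
Proof. by case/List.in_app_iff => h; apply/List.in_app_iff; [left | right; right]. Qed.

Section Lists.
Variables (E : eqType) (delta : nat).

Definition dominated (L L' : seq (entry E)) : Prop :=
  forall y, y \in L -> exists2 y', y' \in L' & tag_le (etag y) (etag y').

Lemma dominated_refl (L : seq (entry E)) : dominated L L.
Proof. by move=> y yL; exists y; rewrite ?tag_le_refl. Qed.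

Lemma mintag_lb t (L : seq (entry E)) :
  tag_le (mintag t L) t /\ {in L, forall y, tag_le (mintag t L) (etag y)}.
Proof.
elim: L t => [|x L IH] t /=; first by split=> //; apply: tag_le_refl.
set t' := if tag_lt (etag x) t then etag x else t.
have [le_t' lb_t'] := IH t'.
have t'_t : tag_le t' t by rewrite /t'; case: ifP => [/tag_ltW | _] //; rewrite tag_le_refl.
have t'_x : tag_le t' (etag x).
  by rewrite /t'; case: ifPn => [_ | /tag_leNlt] //; rewrite tag_le_refl.
split; first exact: tag_le_trans le_t' t'_t.
by move=> y /predU1P [-> | /lb_t'] //; apply: tag_le_trans le_t' t'_x.
Qed.

Lemma mem_insert_entry (L : seq (entry E)) x y : y \in insert_entry delta L x -> y \in x :: L.
Proof.
rewrite /insert_entry; case: ifP => _; first by move=> yL; rewrite inE yL orbT.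
by case: ifP => // _; rewrite mem_filter => /andP [].
Qed.

(* Only entries carrying the minimum tag are evicted, and not all entries carry
   it: two entries with equal tags would contradict the absence of duplicates. *)
Lemma insert_entry_dominates (L : seq (entry E)) x : dominated (x :: L) (insert_entry delta L x).
Proof.
move=> y yxL; rewrite /insert_entry; case: ifPn => [/hasP [z zL /eqP ezx] | hasN].
  case/predU1P: yxL => [-> | yL]; last by exists y; rewrite ?tag_le_refl.
  by exists z; rewrite // ezx tag_le_refl.
case: ifP => [big | _]; last by exists y; rewrite ?tag_le_refl.
set m := mintag _ _; have [_ m_lb] := mintag_lb (etag x) (x :: L).
have [w wxL wm] : exists2 w, w \in x :: L & etag w != m.
  case: L big hasN {yxL m_lb} m => [|z L] // _ hasN m.
  have [xm | xm] := eqVneq (etag x) m; last by exists x; rewrite ?mem_head.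
  have [zm | zm] := eqVneq (etag z) m; last by exists z; rewrite // !inE eqxx orbT.
  by move: hasN; rewrite /= zm xm eqxx.
have [ym | ym] := eqVneq (etag y) m.
  by exists w; rewrite ?mem_filter ?wm // ym m_lb.
by exists y; rewrite ?mem_filter ?ym ?tag_le_refl.
Qed.

Lemma dominated_insert_entry (L : seq (entry E)) x : dominated L (insert_entry delta L x).
Proof. by move=> y yL; apply: insert_entry_dominates; rewrite inE yL orbT. Qed.

End Lists.

(** * Quorums and originated pairs *)

Section Protocol.
Variables (node : finType) (V E : eqType) (enc : V -> node -> E) (dec : seq E -> option V).
Variables (k delta : nat) (v0 : V) (Byz : {set node}).
Hypothesis k_bounds : 0 < k <= #|node|.
Hypothesis dec_sound : forall v (s : seq E) u,
  all (fun e => [exists j, e == enc v j]) s -> dec s = Some u -> u = v.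
Hypothesis byz_bound : 3 * #|Byz| < #|node| - k.

Local Notation gst := (gstate node V E).
Local Notation qs := (qsize node k).
Local Notation step := (Defs.step enc dec k delta Byz).

Lemma quorums_share_honest (A B : seq node) : uniq A -> uniq B -> size A = qs -> size B = qs ->
  exists j, [/\ j \in A, j \in B & j \notin Byz].
Proof.
move=> uA uB sA sB.
have cA : #|[set j in A]| = size A by rewrite cardsE; apply/card_uniqP.
have cB : #|[set j in B]| = size B by rewrite cardsE; apply/card_uniqP.
have cAB := cardsUI [set j in A] [set j in B].
have cU : #|[set j in A] :|: [set j in B]| <= #|node| := max_card _.
have cI := cardsID Byz ([set j in A] :&: [set j in B]).
have cIB : #|[set j in A] :&: [set j in B] :&: Byz| <= #|Byz| := subset_leq_card (subsetIr _ _).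
have : 0 < #|[set j in A] :&: [set j in B] :\: Byz|.
  by move: sA sB cA cB cAB cU cI cIB byz_bound k_bounds; rewrite /qsize; lia.
by case/card_gt0P => j; rewrite !inE => /andP [jB /andP [jA jB']]; exists j.
Qed.

Definition origin (tr : seq (event V)) (t : tag) (v : V) : Prop :=
  (t, v) = (t0, v0) \/ exists c n, List.In (InvPutData c n t v) tr.

Lemma origin_catl tr evs t v : origin tr t v -> origin (tr ++ evs) t v.
Proof. by case=> [|[c [n h]]]; [left | right; exists c, n; apply/List.in_app_iff; left]. Qed.

Lemma origin_catP tr evs t v : origin (tr ++ evs) t v ->
  origin tr t v \/ exists c n, List.In (InvPutData c n t v) evs.
Proof.
case=> [|[c [n /List.in_app_iff [h | h]]]]; first by left; left.
  by left; right; exists c, n.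
by right; exists c, n.
Qed.

(** * The invariant *)

Section Invariant.
Variable O : tag -> V -> Prop.

Definition writes_below c (t : tag) : Prop := forall z v, O (z, c) v -> tag_le (z, c) t.

Definition node_covers (s : gst) c j : Prop :=
  exists2 y, y \in lists s j & writes_below c (etag y).

Definition covering_reply c (r : option (entry E)) : Prop :=
  exists2 x, r = Some x & writes_below c (etag x).

Definition covering_quorum (s : gst) c (Q : seq node) : Prop :=
  [/\ uniq Q, size Q = qs & forall j, j \in Q -> j \notin Byz -> node_covers s c j].

(* Writer [c] never reuses a tag: outside its writes some quorum has all honest
   members storing a tag above [c]'s writes; get-tag reads such a tag from an
   honest member of it, and put-data rebuilds such a quorum from the honest
   acknowledgers of the new tag [tw]. *)
Definition client_inv (s : gst) c : Prop :=
  match cst s c with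
  | WGetTag n _ R => exists Q, [/\ covering_quorum s c Q, uniq (map fst R),
      (forall j r, (j, r) \in R -> j \in Q -> j \notin Byz -> covering_reply c r) &
      (forall j r, List.In (j, MTagReply c n r) (toClient s) -> j \in Q -> j \notin Byz ->
         covering_reply c r)]
  | WPut n A => exists tw, [/\ writes_below c tw, uniq A,
      (forall j, j \in A -> j \notin Byz -> node_covers s c j),
      (forall j, List.In (j, MAck E c n) (toClient s) -> j \notin Byz -> node_covers s c j) &
      (forall j x, List.In (j, MPut c n x) (toNode s) -> etag x = tw)]
  | _ => exists Q, covering_quorum s c Q
  end.

End Invariant.

Record pairs_produced (s : gst) : Prop := {
  lists_produced : forall j x, x \in lists s j -> x \in produced s;
  puts_produced : forall j c n x, List.In (j, MPut c n x) (toNode s) -> x \in produced s;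
  replies_produced : forall j c n L x,
    List.In (j, MDataReply c n L) (toClient s) -> x \in L -> x \in produced s;
  buffers_produced : forall c n R p x,
    cst s c = RGetData V n R -> p \in R -> x \in p.2 -> x \in produced s }.

Definition msg_id (m : msg E) : nat * nat :=
  match m with
  | MQueryTag c n | MQueryData c n | MPut c n _ | MTagReply c n _ | MDataReply c n _
  | MAck c n => (c, n)
  end.

(* Instance numbers are fresh, so a new primitive sees no stale messages. *)
Record fresh_ids (s : gst) : Prop := {
  toNode_fresh : forall j m, List.In (j, m) (toNode s) -> (msg_id m).2 < cnt s (msg_id m).1;
  toClient_fresh : forall j m, List.In (j, m) (toClient s) -> (msg_id m).2 < cnt s (msg_id m).1 }.

Record protocol_inv (s : gst) (O : tag -> V -> Prop) : Prop := {
  inv_produced : pairs_produced s;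
  inv_fresh : fresh_ids s;
  inv_encoded : forall x, x \in produced s -> exists v j, eelt x = enc v j /\ O (etag x) v;
  inv_tag_value : forall t v1 v2, O t v1 -> O t v2 -> v1 = v2;
  inv_clients : forall c, client_inv O s c }.

Definition lists_grow (s s' : gst) : Prop := forall j, dominated (lists s j) (lists s' j).

Definition replies_from (s s' : gst) : Prop :=
  forall j m, List.In (j, m) (toClient s') -> List.In (j, m) (toClient s) \/
    exists m0 out, [/\ List.In (j, m0) (toNode s),
      node_handle delta (lists s j) j m0 (lists s' j) out & List.In (j, m) out].

Lemma writes_below_le O c t t' : writes_below O c t -> tag_le t t' -> writes_below O c t'.
Proof. by move=> h le z v /h /tag_le_trans; apply. Qed.

Section Monotonicity.
Variables (O O' : tag -> V -> Prop) (c : nat).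
Hypothesis O'_sub : forall z v, O' (z, c) v -> O (z, c) v.

Lemma writes_below_sub t : writes_below O c t -> writes_below O' c t.
Proof. by move=> h z v /O'_sub; apply: h. Qed.

Lemma node_covers_mono s s' j : lists_grow s s' -> node_covers O s c j -> node_covers O' s' c j.
Proof.
move=> grow [y yL wy]; have [y' y'L le] := grow j y yL.
by exists y' => //; apply: writes_below_sub; apply: writes_below_le wy le.
Qed.

Lemma covering_quorum_mono s s' Q :
  lists_grow s s' -> covering_quorum O s c Q -> covering_quorum O' s' c Q.
Proof.
by move=> grow [uQ sQ HQ]; split=> // j jQ jB; apply: node_covers_mono grow (HQ j jQ jB).
Qed.

Lemma covering_reply_sub r : covering_reply O c r -> covering_reply O' c r.
Proof. by case=> x -> wx; exists x; last exact: writes_below_sub. Qed.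

Lemma client_inv_frame s s' : client_inv O s c -> cst s' c = cst s c -> lists_grow s s' ->
  replies_from s s' ->
  (forall n j x, List.In (j, MPut c n x) (toNode s') -> List.In (j, MPut c n x) (toNode s)) ->
  client_inv O' s' c.
Proof.
rewrite /client_inv => Hc ->; move: Hc.
case: (cst s c) => [|n v R|n A|n R|n A] Hc grow repl puts;
  try by case: Hc => Q HQ; exists Q; apply: covering_quorum_mono grow HQ.
- case: Hc => Q [HQ uR HR Htr]; exists Q; split => //.
  + exact: covering_quorum_mono HQ.
  + by move=> j r jr jQ jB; apply: covering_reply_sub; apply: HR jr jQ jB.
  + move=> j r /repl [h | [m0 [out [_ Hh inO]]]] jQ jB.
      exact/covering_reply_sub/(Htr j r h jQ jB).
    case: Hh inO => [c' n' x _ xmax | c' n' | c' n' x] [] // [_ _ <-].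
    have [_ _ /(_ j jQ jB) [y yL wy]] := HQ; exists x => //.
    exact/writes_below_sub/(writes_below_le wy (xmax y yL)).
- case: Hc => tw [wtw uA HA Hack Hput]; exists tw; split => //.
  + exact: writes_below_sub.
  + by move=> j jA jB; apply: node_covers_mono grow (HA j jA jB).
  + move=> j /repl [h jB | [m0 [out [inN Hh inO]]] _].
      exact: node_covers_mono grow (Hack j h jB).
    rewrite /node_covers; case: Hh inO inN => [c' n' x _ _ | c' n' | c' n' x] [] // [-> ->] inN.
    have [y yL le] := insert_entry_dominates delta (mem_head x (lists s j)).
    exists y => //; apply: writes_below_sub; rewrite (Hput _ _ inN) in le.
    exact: writes_below_le wtw le.
  + by move=> j x /puts; apply: Hput.
Qed.

End Monotonicity.

Variant recv_spec (cs : cstate node V E) (j : node) (m : msg E) (cs' : cstate node V E) : Prop :=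
| RecvTagReply n v R c r of cs = WGetTag n v R & m = MTagReply c n r & j \notin map fst R
    & cs' = WGetTag n v (rcons R (j, r))
| RecvDataReply n R c L of cs = RGetData V n R & m = MDataReply c n L & j \notin map fst R
    & cs' = RGetData V n (rcons R (j, L))
| RecvWriteAck n A c of cs = WPut V E n A & m = MAck E c n & j \notin A
    & cs' = WPut V E n (rcons A j)
| RecvReadAck n A c of cs = RPut V E n A & m = MAck E c n & j \notin A
    & cs' = RPut V E n (rcons A j).

Lemma recvP cs j m cs' : recv k cs j m = Some cs' -> recv_spec cs j m cs'.
Proof.
case: cs m => [|n v R|n A|n R|n A] [c n'|c n'|c n' x|c n' r|c n' L|c n'] //=;
  case: ifP => // /and3P [/eqP <- jR _] [<-].
- exact: RecvTagReply.
- exact: RecvWriteAck.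
- exact: RecvDataReply.
- exact: RecvReadAck.
Qed.

Lemma client_inv_recv O s s' c j m cs' : client_inv O s c -> reply_to m = Some c ->
  recv k (cst s c) j m = Some cs' -> cst s' c = cs' -> lists s' = lists s ->
  (forall x, List.In x (toClient s') -> List.In x (toClient s)) -> toNode s' = toNode s ->
  (j \notin Byz -> List.In (j, m) (toClient s)) -> client_inv O s' c.
Proof.
move=> Hc Hm /recvP Hr Hcs Hl subC Hn Hjm.
have grow : lists_grow s s' by move=> j'; rewrite Hl; apply: dominated_refl.
have Hq Q : covering_quorum O s c Q -> covering_quorum O s' c Q by apply: covering_quorum_mono.
rewrite /client_inv Hcs; move: Hc; rewrite /client_inv.
case: Hr Hm => [n v R c0 r | n R c0 L | n A c0 | n A c0] -> Em jR ->;
  rewrite Em in Hjm *; case=> ?; subst c0.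
- case=> Q [HQ uR HR Htr]; exists Q; split.
  + exact: Hq.
  + by rewrite map_rcons rcons_uniq jR uR.
  + move=> j0 r0; rewrite mem_rcons inE => /predU1P [[-> ->] | h]; last exact: HR.
    by move=> jQ jB; apply: Htr (Hjm jB) jQ jB.
  + by move=> j0 r0 /subC; apply: Htr.
- by case=> Q /Hq; exists Q.
- case=> tw [wtw uA HA Hack Hput]; exists tw; split => //.
  + by rewrite rcons_uniq jR uA.
  + move=> j0; rewrite mem_rcons inE => /predU1P [-> jB | h jB].
      exact: node_covers_mono grow (Hack _ (Hjm jB) jB).
    exact: node_covers_mono grow (HA j0 h jB).
  + by move=> j0 /subC h jB; apply: node_covers_mono grow (Hack j0 h jB).
  + by move=> j0 x; rewrite Hn; apply: Hput.
- by case=> Q /Hq; exists Q.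
Qed.

Lemma gettag_writes_below O s c n v R t : client_inv O s c -> cst s c = WGetTag n v R ->
  size R = qs -> (forall t', t' \in [seq etag x | x <- pmap snd R] -> tag_le t' t) ->
  writes_below O c t.
Proof.
rewrite /client_inv => + Hc; rewrite Hc => -[Q [[uQ sQ _] uR HR _]] sR tmax.
have [j [jR jQ jB]] := quorums_share_honest uR uQ (etrans (size_map _ _) sR) sQ.
case/mapP: jR => [[j' r]] jr /= ej; subst j'.
have [x ex wx] := HR j r jr jQ jB.
apply: writes_below_le wx (tmax _ _).
by apply/mapP; exists x => //; rewrite mem_pmap; apply/mapP; exists (j, r); rewrite //= ex.
Qed.

Lemma getdata_origin s O c n R t v : protocol_inv s O -> cst s c = RGetData V n R ->
  k <= nlists R t -> dec (elems R t) = Some v -> O t v.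
Proof.
move=> Hinv Hc Hk Hdec; have buf := buffers_produced (inv_produced Hinv) Hc.
have /hasP [p pR /hasP [x xp /eqP xt]] : has (fun p => has (fun x => etag x == t) p.2) R.
  by rewrite has_count; case/andP: k_bounds => k0 _; apply: leq_trans k0 Hk.
have [u [_ [_ Ou]]] := inv_encoded Hinv (buf _ _ pR xp); rewrite xt in Ou.
suff -> : v = u by [].
apply: dec_sound Hdec; apply/allP => e /flattenP [_ /mapP [p' p'R ->] /mapP [y]].
rewrite mem_filter => /andP [/eqP yt yp'] ->.
have [w [j [-> Ow]]] := inv_encoded Hinv (buf _ _ p'R yp').
by rewrite yt in Ow; rewrite (inv_tag_value Hinv Ow Ou); apply/existsP; exists j.
Qed.

Lemma init_inv : protocol_inv (init enc v0) (origin [::]).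
Proof.
have O0 t v : origin [::] t v -> t = t0 /\ v = v0 by case=> [[-> ->] | [c [n []]]].
split=> //=.
- by split=> //= j x; rewrite inE => /eqP ->; apply/mapP; exists j; rewrite ?mem_enum.
- by move=> x /mapP [j _ ->]; exists v0, j; split=> //; left.
- by move=> t v1 v2 /O0 [_ ->] /O0 [_ ->].
- move=> c; exists (take qs (enum node)); split.
  + by rewrite take_uniq // enum_uniq.
  + by rewrite size_takel // -cardT; move: k_bounds; rewrite /qsize; lia.
  + move=> j _ _; exists (t0, enc v0 j, None); first by rewrite inE.
    by move=> z v /O0 [-> _]; apply: tag_le_refl.
Qed.

(** * Effect of a step *)

Lemma In_broadcast (j : node) (m m0 : msg E) :
  List.In (j, m) [seq (j, m0) | j <- enum node] -> m = m0.
Proof. by case/List.in_map_iff => j' [[_ ->]]. Qed.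

Lemma In_put_msgs j m c n t v :
  List.In (j, m) (put_msgs enc c n t v) -> m = MPut c n (t, enc v j, Some c).
Proof. by case/List.in_map_iff => j' [[-> ->]]. Qed.

Lemma mem_put_sigs c t v j : (t, enc v j, Some c) \in put_sigs enc c t v.
Proof. by apply/mapP; exists j; rewrite ?mem_enum. Qed.

Lemma step_produced s evs s' x : step s evs s' -> x \in produced s' ->
  x \in produced s \/
  exists c n t v j, x = (t, enc v j, Some c) /\ List.In (InvPutData c n t v) evs.
Proof.
case=> {s evs s'} /=; try by move=> *; left.
  move=> s c n v R t n' _ _ _ _ _; rewrite mem_cat => /orP [|/mapP [j _ ->]]; first by left.
  by right; exists c, n', (t.1.+1, c), v, j; split=> //; right; left.
move=> s c n R t v n' _ _ _ _ _ _; rewrite mem_cat => /orP [|/mapP [j _ ->]]; first by left.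
by right; exists c, n', t, v, j; split=> //; right; left.
Qed.

Lemma step_produced_sub s evs s' : step s evs s' -> {subset produced s <= produced s'}.
Proof. by case=> {s evs s'} /= * x; rewrite ?mem_cat => ->. Qed.

Lemma step_produced_puts s evs s' c n t v j : step s evs s' ->
  List.In (InvPutData c n t v) evs -> (t, enc v j, Some c) \in produced s'.
Proof.
case=> {s evs s'} /=; try by move=> *; intuition discriminate.
- move=> s c' n' v' R t' n'' _ _ _ _ _ [// | [[<- _ <- <-] | []]].
  by rewrite mem_cat mem_put_sigs orbT.
- move=> s c' n' R t' v' n'' _ _ _ _ _ _ [// | [[<- _ <- <-] | []]].
  by rewrite mem_cat mem_put_sigs orbT.
Qed.

Lemma step_put_msgs s evs s' j c n x : step s evs s' -> List.In (j, MPut c n x) (toNode s') ->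
  List.In (j, MPut c n x) (toNode s) \/
  exists t v, x = (t, enc v j, Some c) /\ List.In (InvPutData c n t v) evs.
Proof.
case=> {s evs s'} /=; try by move=> *; left.
- by move=> s c' v n' _ _ /List.in_app_iff [|/In_broadcast]; [left|].
- move=> s c' n' v R t n'' _ _ _ _ _ /List.in_app_iff [|/In_put_msgs [-> -> ->]]; first by left.
  by right; exists (t.1.+1, c'), v; split=> //; right; left.
- by move=> s c' n' _ _ /List.in_app_iff [|/In_broadcast]; [left|].
- move=> s c' n' R t v n'' _ _ _ _ _ _ /List.in_app_iff [|/In_put_msgs [-> -> ->]]; first by left.
  by right; exists t, v; split=> //; right; left.
- by move=> s j' m l1 l2 L' out _ -> _ /(In_cat_cons (j', m)); left.
Qed.

Lemma step_replies_from s evs s' : step s evs s' -> replies_from s s'.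
Proof.
rewrite /replies_from; case=> {s evs s'} /=; try by move=> *; left.
  by move=> s c j m l1 l2 cs' e _ _ j' m'; rewrite e => /(In_cat_cons (j, m)); left.
move=> s j m l1 l2 L' out _ e Hh j' m' /List.in_app_iff [| inO]; first by left.
have ej : j' = j by case: Hh inO => [? ? ? _ _ | ? ? | ? ? ?] [[-> _] | []].
subst j'; right; exists m, out; split=> //; last by rewrite /updn eqxx.
by rewrite e; apply: List.in_elt.
Qed.

Lemma step_lists s evs s' j x : step s evs s' -> x \in lists s' j ->
  [\/ x \in lists s j, x \in produced s | exists c n, List.In (j, MPut c n x) (toNode s)].
Proof.
case=> {s evs s'} /=; try by move=> *; apply: Or31.
- move=> s j' m l1 l2 L' out _ e Hh; rewrite /updn; case: eqP => [-> | _]; last exact: Or31.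
  case: Hh e => [? ? ? _ _ | ? ? | c n y] e; try exact: Or31.
  case/mem_insert_entry/predU1P => [-> | ]; last exact: Or31.
  by apply: Or33; exists c, n; rewrite e; apply: List.in_elt.
- move=> s j' j'' y _ _ yP; rewrite /updn; case: eqP => [-> | _]; last exact: Or31.
  by case/mem_insert_entry/predU1P => [-> | ]; [apply: Or32 | apply: Or31].
Qed.

Lemma step_lists_grow s evs s' : step s evs s' -> lists_grow s s'.
Proof.
rewrite /lists_grow; case=> {s evs s'} /=; try by move=> *; apply: dominated_refl.
- move=> s j m l1 l2 L' out _ _ Hh j'; rewrite /updn.
  case: eqP => [-> | _]; last exact: dominated_refl.
  by case: Hh => *; [apply: dominated_refl | apply: dominated_refl | apply: dominated_insert_entry].
- move=> s j j' x _ _ _ j0; rewrite /updn; case: eqP => [-> | _]; last exact: dominated_refl.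
  exact: dominated_insert_entry.
Qed.

Lemma recv_buffer (cs : cstate node V E) j m n R : recv k cs j m = Some (RGetData V n R) ->
  exists R0 c L, [/\ cs = RGetData V n R0, m = MDataReply c n L & R = rcons R0 (j, L)].
Proof.
case: cs m => [|n' v R0|n' A|n' R0|n' A] [c n''|c n''|c n'' x|c n'' r|c n'' L|c n''] //=;
  case: ifP => // /and3P [/eqP <- _ _] [<- <-]; by exists R0, c, L.
Qed.

Lemma step_buffers_produced s evs s' c n R p x : step s evs s' -> pairs_produced s ->
  cst s' c = RGetData V n R -> p \in R -> x \in p.2 -> x \in produced s.
Proof.
case=> {s evs s'} /=; try by move=> *; apply: buffers_produced; eauto.
- by move=> s c' v n' _ _ P; rewrite /upd; case: eqP => // _; apply: buffers_produced.
- move=> s c' n' v' R' t n'' _ _ _ _ _ P.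
  by rewrite /upd; case: eqP => // _; apply: buffers_produced.
- by move=> s c' n' _ _ P; rewrite /upd; case: eqP => [_ [_ <-] | _] //; apply: buffers_produced.
- move=> s c' n' R' t v n'' _ _ _ _ _ _ P.
  by rewrite /upd; case: eqP => // _; apply: buffers_produced.
- by move=> s c' n' A _ _ P; rewrite /upd; case: eqP => // _; apply: buffers_produced.
- move=> s c' j m l1 l2 cs' e _ Hr P; rewrite /upd; case: eqP => _; last exact: buffers_produced.
  move=> Ecs; rewrite Ecs in Hr; have [R' [c'' [L [Hc Em ->]]]] := recv_buffer Hr.
  rewrite mem_rcons inE => /predU1P [-> /= | ]; last exact: buffers_produced Hc.
  by apply: (replies_produced P); rewrite e Em; apply: List.in_elt.
- move=> s c' j m cs' _ ok _ Hr P; rewrite /upd; case: eqP => _; last exact: buffers_produced.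
  move=> Ecs; rewrite Ecs in Hr; have [R' [c'' [L [Hc Em ->]]]] := recv_buffer Hr.
  move: ok; rewrite Em => /allP ok; rewrite mem_rcons inE => /predU1P [-> /= /ok // | ].
  exact: buffers_produced Hc.
Qed.

(** * Preservation of the invariant *)

Lemma step_pairs_produced s evs s' : step s evs s' -> pairs_produced s -> pairs_produced s'.
Proof.
move=> Hst P; have sub := step_produced_sub Hst; split.
- move=> j x /(step_lists Hst) [/(lists_produced P) | | [c [n /(puts_produced P)]]]; exact: sub.
- move=> j c n x /(step_put_msgs Hst) [/(puts_produced P)/sub // | [t [v [-> p]]]].
  exact: step_produced_puts Hst p.
- move=> j c n L x /(step_replies_from Hst).
  case=> [/(replies_produced P) h /h/sub // | [m [out [_ Hh inO]]]].
  case: Hh inO => [? ? ? _ _ | c' n' | ? ? ?] [] // [_ _ <-] /(lists_produced P); exact: sub.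
- move=> c n R p x Hc pR xp; exact/sub/(step_buffers_produced Hst P Hc pR xp).
Qed.

Lemma cnt_bump (f : nat -> nat) c x : f x <= upd f c (f c).+1 x.
Proof. by rewrite /upd; case: eqP => [->|]. Qed.

Lemma step_cnt_mono s evs s' : step s evs s' -> forall c, cnt s c <= cnt s' c.
Proof. by case=> {s evs s'} //= *; subst; apply: cnt_bump. Qed.

Lemma node_handle_id L (j : node) m L' out j' m' :
  node_handle delta L j m L' out -> List.In (j', m') out -> msg_id m' = msg_id m.
Proof. by case=> [? ? ? _ _ | ? ? | ? ? ?] [[_ <-] | []]. Qed.

Lemma step_fresh_ids s evs s' : step s evs s' -> fresh_ids s -> fresh_ids s'.
Proof.
move=> Hst [FN FC]; have mono := step_cnt_mono Hst; split; last first.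
  move=> j m /(step_replies_from Hst) [/FC lt | [m0 [out [/FN lt Hh inO]]]].
    exact: leq_trans lt (mono _).
  by rewrite (node_handle_id Hh inO); apply: leq_trans lt (mono _).
clear FC; case: Hst FN mono => {s evs s'} //=.
- move=> s c v n _ -> FN mono j m /List.in_app_iff [/FN lt | /In_broadcast -> /=].
    exact: leq_trans lt (mono _).
  by rewrite /upd eqxx.
- move=> s c n v R t n' _ _ _ _ -> FN mono j m /List.in_app_iff [/FN lt | /In_put_msgs -> /=].
    exact: leq_trans lt (mono _).
  by rewrite /upd eqxx.
- move=> s c n _ -> FN mono j m /List.in_app_iff [/FN lt | /In_broadcast -> /=].
    exact: leq_trans lt (mono _).
  by rewrite /upd eqxx.
- move=> s c n R t v n' _ _ _ _ _ -> FN mono j m /List.in_app_iff [/FN lt | /In_put_msgs -> /=].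
    exact: leq_trans lt (mono _).
  by rewrite /upd eqxx.
- by move=> s j m l1 l2 L' out _ e _ FN _ j' m' /(In_cat_cons (j, m)); rewrite -e; apply: FN.
Qed.

Lemma step_put_origin s tr evs s' c n t v : step s evs s' -> protocol_inv s (origin tr) ->
  List.In (InvPutData c n t v) evs ->
  origin tr t v \/ exists2 t', writes_below (origin tr) c t' & t = (t'.1.+1, c).
Proof.
case=> {s evs s'} /=; try by move=> *; intuition discriminate.
- move=> s c' n' v' R t' n'' Hc sR _ tmax _ Hinv [// | [[<- _ <- _] | []]].
  by right; exists t'; first exact: gettag_writes_below (inv_clients Hinv c') Hc sR tmax.
- move=> s c' n' R t' v' n'' Hc _ Hk _ Hdec _ Hinv [// | [[_ _ <- <-] | []]].
  by left; apply: getdata_origin Hinv Hc Hk Hdec.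
Qed.

Lemma step_put_unique s evs s' c1 n1 t1 v1 c2 n2 t2 v2 : step s evs s' ->
  List.In (InvPutData c1 n1 t1 v1) evs -> List.In (InvPutData c2 n2 t2 v2) evs -> v1 = v2.
Proof. by case=> {s evs s'} /= *; intuition congruence. Qed.

Lemma step_encoded s tr evs s' x : step s evs s' -> protocol_inv s (origin tr) ->
  x \in produced s' ->
  exists v j, eelt x = enc v j /\ origin (tr ++ evs) (etag x) v.
Proof.
move=> Hst Hinv /(step_produced Hst).
case=> [/(inv_encoded Hinv) [v [j [ex Ox]]] | [c [n [t [v [j [-> inE]]]]]]].
  by exists v, j; split=> //; apply: origin_catl.
by exists v, j; split=> //; right; exists c, n; apply/List.in_app_iff; right.
Qed.

Lemma step_tag_value s tr evs s' t v1 v2 : step s evs s' -> protocol_inv s (origin tr) ->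
  origin (tr ++ evs) t v1 -> origin (tr ++ evs) t v2 -> v1 = v2.
Proof.
move=> Hst Hinv.
have old_new c n v v' : List.In (InvPutData c n t v) evs -> origin tr t v' -> v' = v.
  case/(step_put_origin Hst Hinv) => [o o' | [t' wt' ->] /wt'].
    exact: (inv_tag_value Hinv o' o).
  by rewrite tag_le_succF.
case/origin_catP => [o1 | [c1 [n1 p1]]] /origin_catP [o2 | [c2 [n2 p2]]].
- exact: (inv_tag_value Hinv o1 o2).
- exact: old_new p2 o1.
- by rewrite (old_new _ _ _ _ p1 o2).
- exact: step_put_unique Hst p1 p2.
Qed.

Lemma step_origin_sub s tr evs s' c0 : step s evs s' -> protocol_inv s (origin tr) ->
  (forall n t v, List.In (InvPutData c0 n t v) evs -> origin tr t v) ->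
  forall z v, origin (tr ++ evs) (z, c0) v -> origin tr (z, c0) v.
Proof.
move=> Hst Hinv old z v /origin_catP [// | [c [n p]]].
have [// | [t' _ [_ ec]]] := step_put_origin Hst Hinv p.
by rewrite -ec in p; apply: old p.
Qed.

Lemma step_client_inv_passive s tr evs s' c0 : step s evs s' -> protocol_inv s (origin tr) ->
  cst s' c0 = cst s c0 -> (forall n t v, ~ List.In (InvPutData c0 n t v) evs) ->
  client_inv (origin (tr ++ evs)) s' c0.
Proof.
move=> Hst Hinv e noput.
have Osub : forall z v, origin (tr ++ evs) (z, c0) v -> origin tr (z, c0) v.
  by apply: (step_origin_sub Hst Hinv) => ? ? ? /noput.
apply: (client_inv_frame Osub (inv_clients Hinv c0) e).
- exact: step_lists_grow Hst.
- exact: step_replies_from Hst.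
by move=> n j x /(step_put_msgs Hst) [// | [t [v [_ /noput]]]].
Qed.

Lemma silent_step_client_inv O s evs s' c0 : step s evs s' -> evs = [::] ->
  client_inv O s c0 -> client_inv O s' c0.
Proof.
move=> Hst Eevs Hc0.
have frame : cst s' c0 = cst s c0 -> client_inv O s' c0.
  move=> e; apply: (client_inv_frame (fun _ _ h => h) Hc0 e).
  - exact: step_lists_grow Hst.
  - exact: step_replies_from Hst.
  by move=> n j x /(step_put_msgs Hst) [// | [t [v [_]]]]; rewrite Eevs.
case: Hst Eevs Hc0 frame => {s evs s'} //.
- move=> s c j m l1 l2 cs' e Hm Hr _ Hc0 frame.
  have [? | ne] := eqVneq c0 c; last by apply: frame; rewrite /= /upd (negbTE ne).
  subst c0; apply: client_inv_recv Hc0 Hm Hr _ _ _ _ _ => //=; first by rewrite /upd eqxx.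
    by move=> x; rewrite e; apply: In_cat_cons.
  by rewrite e => _; apply: List.in_elt.
- move=> s c j m cs' jB _ Hm Hr _ Hc0 frame.
  have [? | ne] := eqVneq c0 c; last by apply: frame; rewrite /= /upd (negbTE ne).
  subst c0; apply: client_inv_recv Hc0 Hm Hr _ _ _ _ _ => //=; first by rewrite /upd eqxx.
  by rewrite jB.
- by move=> s j m l1 l2 L' out _ _ _ _ _ frame; apply: frame.
- by move=> s j j' x _ _ _ _ _ frame; apply: frame.
Qed.

Definition ev_client (e : event V) : nat :=
  match e with
  | InvGetTag c _ | RespGetTag c _ _ | InvGetData c _ | RespGetData c _ _ _
  | InvPutData c _ _ _ | RespPutData c _ => c
  end.

Lemma upd_other (A : Type) (f : nat -> A) c c0 a : c != c0 -> upd f c a c0 = f c0.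
Proof. by rewrite /upd eq_sym => /negbTE ->. Qed.

Lemma step_bystander s evs s' e c0 : step s evs s' -> List.In e evs -> ev_client e != c0 ->
  cst s' c0 = cst s c0 /\ forall n t v, ~ List.In (InvPutData c0 n t v) evs.
Proof.
case=> {s evs s'}; try by move=> *.
- by move=> s c v n _ _ [<- | []] ne; split=> /= [|? ? ? [|[]]] //; apply: upd_other.
- move=> s c n v R t n' _ _ _ _ _ ine ne.
  have {ine}ne : c != c0 by case: ine ne => [<- | [<- | []]].
  split=> /= [|? ? ? [// | [[ec] | []]]]; first exact: upd_other.
  by move: ne; rewrite ec eqxx.
- by move=> s c n _ _ [<- | []] ne; split=> /= [|? ? ? [|[]]] //; apply: upd_other.
- move=> s c n R t v n' _ _ _ _ _ _ ine ne.
  have {ine}ne : c != c0 by case: ine ne => [<- | [<- | []]].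
  split=> /= [|? ? ? [// | [[ec] | []]]]; first exact: upd_other.
  by move: ne; rewrite ec eqxx.
- by move=> s c n A _ _ [<- | []] ne; split=> /= [|? ? ? [|[]]] //; apply: upd_other.
Qed.

Lemma step_client_inv_actor s tr evs s' e c : step s evs s' -> protocol_inv s (origin tr) ->
  List.In e evs -> ev_client e = c -> client_inv (origin (tr ++ evs)) s' c.
Proof.
move=> Hst Hinv; have Hc := inv_clients Hinv c; have [FN FC] := inv_fresh Hinv.
have grow := step_lists_grow Hst; have sub := step_origin_sub Hst Hinv (c0 := c).
case: Hst Hinv Hc FN FC grow sub => {s evs s'}; try by move=> *.
- move=> s c' v n Hidle -> Hinv Hc _ FC grow sub [<- | []] /= ?; subst c'.
  rewrite /client_inv /= /upd eqxx; move: Hc; rewrite /client_inv Hidle => -[Q HQ].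
  exists Q; split=> //; last by move=> j r /FC; rewrite /= ltnn.
  by apply: covering_quorum_mono grow HQ; apply: sub => ? ? ? [|[]].
- move=> s c' n v R t n' Hc' sR _ tmax -> Hinv Hc FN FC _ _ ine ec.
  have ? : c' = c by case: ine ec => [<- | [<- | []]].
  subst c'; have wt := gettag_writes_below Hc Hc' sR tmax.
  rewrite /client_inv /= /upd eqxx; exists (t.1.+1, c); split=> //.
  + move=> z w /origin_catP [/wt le | [c1 [n1 [// | [[_ _ -> _] | []]]]]].
      exact: tag_le_trans le (tag_le_succ _ _).
    exact: tag_le_refl.
  + by move=> j /FC; rewrite /= ltnn.
  + by move=> j x /List.in_app_iff [/FN /= | /In_put_msgs [->]]; rewrite ?ltnn.
- move=> s c' n Hidle -> Hinv Hc _ _ grow sub [<- | []] /= ?; subst c'.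
  rewrite /client_inv /= /upd eqxx; move: Hc; rewrite /client_inv Hidle => -[Q HQ].
  by exists Q; apply: covering_quorum_mono grow HQ; apply: sub => ? ? ? [|[]].
- move=> s c' n R t v n' Hc' _ Hk _ Hdec -> Hinv Hc _ _ grow sub ine ec.
  have ? : c' = c by case: ine ec => [<- | [<- | []]].
  subst c'; rewrite /client_inv /= /upd eqxx; move: Hc; rewrite /client_inv Hc' => -[Q HQ].
  exists Q; apply: covering_quorum_mono grow HQ; apply: sub => ? ? ? [// | [[_ <- <-] | []]].
  exact: getdata_origin Hinv Hc' Hk Hdec.
- move=> s c' n A Hput sA Hinv Hc _ _ grow sub [<- | []] /= ?; subst c'.
  have Osub : forall z v, origin (tr ++ [:: RespPutData V c n]) (z, c) v -> origin tr (z, c) v.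
    by apply: sub => ? ? ? [|[]].
  rewrite /client_inv /= /upd eqxx; move: Hc; rewrite /client_inv.
  case: Hput => ->; last by case=> Q HQ; exists Q; apply: covering_quorum_mono grow HQ.
  case=> tw [_ uA HA _ _]; exists A; split=> // j jA jB.
  by apply: node_covers_mono grow (HA j jA jB).
Qed.

Lemma step_client_inv s tr evs s' c0 : step s evs s' -> protocol_inv s (origin tr) ->
  client_inv (origin (tr ++ evs)) s' c0.
Proof.
case: evs => [|e evs] Hst Hinv.
  by rewrite cats0; apply: silent_step_client_inv Hst erefl (inv_clients Hinv c0).
have [ec | ne] := eqVneq (ev_client e) c0.
  exact: step_client_inv_actor Hst Hinv (List.in_eq _ _) ec.
have [Ecst noput] := step_bystander Hst (List.in_eq _ _) ne.
exact: step_client_inv_passive Hst Hinv Ecst noput.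
Qed.

Lemma step_inv s tr evs s' : step s evs s' -> protocol_inv s (origin tr) ->
  protocol_inv s' (origin (tr ++ evs)).
Proof.
move=> Hst Hinv; split.
- exact: step_pairs_produced Hst (inv_produced Hinv).
- exact: step_fresh_ids Hst (inv_fresh Hinv).
- by move=> x; apply: step_encoded Hst Hinv.
- by move=> t v1 v2; apply: step_tag_value Hst Hinv.
- by move=> c; apply: step_client_inv Hst Hinv.
Qed.

Lemma reach_inv s tr : reach enc dec k delta v0 Byz s tr -> protocol_inv s (origin tr).
Proof. by elim=> [|s1 tr1 evs s2 _ Hinv Hst]; [apply: init_inv | apply: step_inv Hst Hinv]. Qed.

Lemma step_getdata_resp s evs s' c n t v : step s evs s' -> List.In (RespGetData c n t v) evs ->
  exists n0 R, [/\ cst s c = RGetData V n0 R, k <= nlists R t & dec (elems R t) = Some v].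
Proof.
case=> {s evs s'} /=; try by move=> *; intuition discriminate.
by move=> s c' n' R t' v' n'' Hc _ Hk _ Hdec _ [[<- _ <- <-] | [|[]]] //; exists n', R.
Qed.

Lemma reach_getdata_origin s tr pre post c n t v : reach enc dec k delta v0 Byz s tr ->
  tr = pre ++ RespGetData c n t v :: post -> origin pre t v.
Proof.
move=> Hr; elim: Hr pre post => [|s1 tr1 evs s2 Hr IH Hst] pre post; first by case: pre.
move=> e; case: (cat_eq_split e) => [[post' e'] | [evs1 [eevs ->]]]; first exact: IH e'.
have inE : List.In (RespGetData c n t v) evs by rewrite eevs; apply: List.in_elt.
have [n0 [R [Hc Hk Hdec]]] := step_getdata_resp Hst inE.
exact/origin_catl/(getdata_origin (reach_inv Hr) Hc Hk Hdec).
Qed.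

End Protocol.

Theorem mainTheorem5 (node : finType) (V E : eqType)
  (enc : V -> node -> E) (dec : seq E -> option V)
  (k delta b : nat) (v0 : V) (Byz : {set node}) :
  rlnc_code enc dec k -> 1 <= delta ->
  #|Byz| <= b -> 3 * b < #|node| - k ->
  forall (s : gstate node V E) (tr : seq (event V)),
  reach enc dec k delta v0 Byz s tr ->
  forall pre post (c n : nat) (t : tag) (v : V),
  tr = pre ++ RespGetData c n t v :: post ->
  (t, v) = (t0, v0) \/
  exists pre1 pre2 (c' n' : nat), pre = pre1 ++ InvPutData c' n' t v :: pre2.
Proof.
(* Safety holds for every [delta]. *)
move=> [k_bounds _ dec_sound] _ Byz_b b_bound s tr Hr pre post c n t v e.
have byz_bound : 3 * #|Byz| < #|node| - k by lia.
case: (reach_getdata_origin k_bounds dec_sound byz_bound Hr e) => [| [c' [n' put]]]; first by left.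
have [pre1 [pre2 ->]] := List.in_split _ _ put.
by right; exists pre1, pre2, c', n'.
Qed.
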